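(* Let $f(z)=\sum_{k\ge0}f_kz^k$ be holomorphic on the open unit disk, $0<r<1$, and let $N(n)$ be an increasing sequence of integers with $N(n)/n\to\infty$ such that for each $n$ there are $P_n\in\mathcal P_n$ and $Q_n\in\mathcal P_1$, $Q_n\neq0$, with $Q_nf-P_n$ having at least $N(n)$ zeros in $\overline\Delta_r$, normalized so that $Q_n(z)=\alpha_nz-1$ with $\alpha_n\in\mathbb C$ or $Q_n(z)=z$ (written $\alpha_n=\infty$). Let $\rho=1/\limsup_k|f_k|^{1/k}\ge1$ be the radius of convergence of the Taylor series of $f$ at $0$. Then $\limsup_{n\to\infty}|\alpha_n|\ge1/\rho$.
   Context: $\mathcal P_n$ is the space of complex polynomials of degree at most $n$; zeros are counted with multiplicity; $|\infty|=\infty$ and $1/\infty=0$. *)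

From Stdlib Require Import Reals List.
From Coquelicot Require Import Coquelicot.
Open Scope R_scope.

Definition holo_disk (g : C -> C) : Prop :=
  forall z : C, Cmod z < 1 -> @ex_derive C_AbsRing C_NormedModule g z.

Definition zero_mult_ge (g : C -> C) (z0 : C) (m : nat) : Prop :=
  exists h : C -> C, holo_disk h /\
    forall z : C, Cmod z < 1 -> g z = Cmult (pow_n (K:=C_Ring) (Cminus z z0) m) (h z).

(* g has at least N zeros (counted with multiplicity) in the closed disk
   of radius r: distinct points z_i with |z_i| <= r, multiplicities m_i,
   sum m_i >= N. (If g vanishes identically every multiplicity is allowed.) *)
Definition at_least_zeros (g : C -> C) (r : R) (N : Z) : Prop :=
  exists l : list (C * nat),
    NoDup (map fst l) /\
    (forall p, In p l -> Cmod (fst p) <= r /\ zero_mult_ge g (fst p) (snd p)) /\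
    (N <= Z.of_nat (fold_right (fun p s => (snd p + s)%nat) 0%nat l))%Z.

Definition poly_eval (c : nat -> C) (n : nat) (z : C) : C :=
  sum_n (G:=C_AbelianMonoid) (fun k => Cmult (c k) (pow_n (K:=C_Ring) z k)) n.

(* normalized Q_n : Some a  <->  Q_n(z) = a z - 1 ;  None  <->  Q_n(z) = z (alpha_n = oo) *)
Definition Q_eval (alpha : option C) (z : C) : C :=
  match alpha with Some a => Cminus (Cmult a z) (RtoC 1) | None => z end.

Definition abs_alpha (alpha : option C) : Rbar :=
  match alpha with Some a => Finite (Cmod a) | None => p_infty end.

Definition LimSupRbar (u : nat -> Rbar) : Rbar :=
  Rbar_glb (fun y => exists N : nat,
    y = Rbar_lub (fun x => exists n : nat, (N <= n)%nat /\ x = u n)).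

(* |f_k|^{1/k}  (the k = 0 term is irrelevant for the limsup) *)
Definition root_abs (fk : nat -> C) (k : nat) : R :=
  if Req_EM_T (Cmod (fk k)) 0 then 0 else Rpower (Cmod (fk k)) (/ INR k).

Definition inv_ext (x : Rbar) : Rbar :=
  match x with
  | Finite y => if Req_EM_T y 0 then p_infty else Finite (/ y)
  | p_infty => Finite 0
  | m_infty => Finite 0
  end.

Definition conv_radius (fk : nat -> C) : Rbar :=
  inv_ext (LimSup_seq (root_abs fk)).

From Stdlib Require Import Reals List Lra Lia Psatz FunctionalExtensionality ClassicalEpsilon.
From Coquelicot Require Import Coquelicot.
Open Scope R_scope.

(* Measure power series by their L^2 norms on circles [|z| = rho].  The remainder
   [g_n = (alpha_n z - 1) f - P_n] has Taylor coefficients [-(f_(j+1) - alpha_n f_j)] for [j >= n].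
   Dividing out its [N(n)] zeros in [|z| <= r] (Blaschke factors are isometries on a circle) shows
   that [g_n] is smaller on [|z| = R1] than on [|z| = R2] by a factor [q^N(n)] with [q < 1], while
   the norms of the degree-[n] polynomial [P_n] on these circles differ by at most [(R2/R1)^n].
   Since [N(n)/n -> oo], [|f_(j+1) - alpha_n f_j| R1^(j+1)] is tiny for [j >= n].  If [|alpha_n| < b]
   for all large [n], iterating this recursion from [j = n ~ k/m] gives [|f_k| <= A b'^k] for any
   [b' > b], hence [1/rho = limsup |f_k|^(1/k) <= b]. *)

Lemma le_of_le_add_mul (x y z : R) : 0 <= z -> (forall t, 0 < t -> x <= y + t * z) -> x <= y.
Proof.
  intros Hz H. apply Rle_plus_epsilon. intros eps Heps.
  destruct (Req_dec z 0) as [->|Hz0].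
  - specialize (H 1 Rlt_0_1). lra.
  - specialize (H (eps / z) ltac:(apply Rdiv_lt_0_compat; lra)).
    replace (eps / z * z) with eps in H by (field; lra). exact H.
Qed.

Lemma le0_of_le_mul_small (x K t0 : R) : 0 < t0 -> (forall t, 0 < t < t0 -> x <= t * K) -> x <= 0.
Proof.
  intros Ht0 H. destruct (Rle_dec x 0) as [|Hx]; [assumption|exfalso].
  assert (HK : 0 < K).
  { destruct (Rle_dec K 0); [|lra]. specialize (H (t0 / 2) ltac:(lra)). nra. }
  set (t := Rmin (t0 / 2) (x / (2 * K))).
  assert (Ht : 0 < t) by (apply Rmin_glb_lt; [lra|apply Rdiv_lt_0_compat; lra]).
  assert (Ht1 : t <= t0 / 2) by apply Rmin_l.
  assert (Ht2 : t * K <= x / 2).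
  { apply Rle_trans with (x / (2 * K) * K).
    - apply Rmult_le_compat_r; [lra|apply Rmin_r].
    - right; field; lra. }
  specialize (H t ltac:(lra)). lra.
Qed.

Lemma Cmod_add_sq_le (x y : C) (t : R) : 0 < t ->
  Cmod (x + y)%C ^ 2 <= (1 + t) * Cmod x ^ 2 + (1 + / t) * Cmod y ^ 2.
Proof.
  intros Ht.
  assert (Hsplit : 2 * Cmod x * Cmod y <= t * Cmod x ^ 2 + / t * Cmod y ^ 2).
  { replace (t * Cmod x ^ 2 + / t * Cmod y ^ 2)
      with (2 * Cmod x * Cmod y + / t * (t * Cmod x - Cmod y) ^ 2) by (field; lra).
    assert (0 <= / t * (t * Cmod x - Cmod y) ^ 2).
    { apply Rmult_le_pos; [left; apply Rinv_0_lt_compat; lra|apply pow2_ge_0]. }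
    lra. }
  pose proof (Cmod_triangle x y). pose proof (Cmod_ge_0 (x + y)%C).
  pose proof (Cmod_ge_0 x). pose proof (Cmod_ge_0 y). nra.
Qed.

(* Taking [t = (b + eps) / (a + eps)] turns the bound into [(a + b)^2 + eps * (a + b)]. *)
Lemma le_sq_add_of_split (x a b : R) : 0 <= a -> 0 <= b ->
  (forall t, 0 < t -> x <= (1 + t) * a ^ 2 + (1 + / t) * b ^ 2) -> x <= (a + b) ^ 2.
Proof.
  intros Ha Hb H. apply (le_of_le_add_mul _ _ (a + b)); [lra|]. intros eps Heps.
  set (t := (b + eps) / (a + eps)).
  assert (Ht : 0 < t) by (apply Rdiv_lt_0_compat; lra).
  assert (E1 : t * (a + eps) = b + eps) by (unfold t; field; lra).
  assert (E2 : / t * (b + eps) = a + eps) by (unfold t; field; lra).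
  assert (Hit : 0 < / t) by (apply Rinv_0_lt_compat; lra).
  assert (Ha2 : t * a ^ 2 <= a * (b + eps)).
  { rewrite <- E1. assert (0 <= t * a * eps) by (apply Rmult_le_pos; [apply Rmult_le_pos|]; lra). nra. }
  assert (Hb2 : / t * b ^ 2 <= b * (a + eps)).
  { rewrite <- E2. assert (0 <= / t * b * eps) by (apply Rmult_le_pos; [apply Rmult_le_pos|]; lra). nra. }
  specialize (H t Ht). nra.
Qed.

Lemma pow_le_pow_le1 (q : R) (m n : nat) : 0 <= q <= 1 -> (m <= n)%nat -> q ^ n <= q ^ m.
Proof.
  intros Hq Hmn. replace n with (m + (n - m))%nat by lia. rewrite pow_add.
  pose proof (pow_le q m (proj1 Hq)). pose proof (pow_le q (n - m) (proj1 Hq)).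
  assert (q ^ (n - m) <= 1) by (rewrite <- (pow1 (n - m)); apply pow_incr; lra).
  nra.
Qed.

Lemma exists_pow_le (q y : R) : 0 <= q < 1 -> 0 < y -> exists l : nat, q ^ l <= y.
Proof.
  intros Hq Hy. destruct (pow_lt_1_zero q ltac:(rewrite Rabs_pos_eq; lra) y Hy) as [l Hl].
  exists l. specialize (Hl l (le_n _)). pose proof (Rle_abs (q ^ l)). lra.
Qed.

Lemma exists_pow_ge (x y : R) : 1 < x -> exists m : nat, (1 <= m)%nat /\ y <= x ^ m.
Proof.
  intros Hx. destruct (Pow_x_infinity x ltac:(rewrite Rabs_pos_eq; lra) y) as [l Hl].
  exists (S l). split; [lia|]. specialize (Hl (S l) ltac:(lia)).
  rewrite Rabs_pos_eq in Hl by (apply pow_le; lra). lra.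
Qed.

Lemma Cmod_RtoC_nonneg (x : R) : 0 <= x -> Cmod (RtoC x) = x.
Proof. intros Hx. rewrite Cmod_R, Rabs_pos_eq; auto. Qed.

Lemma Cmod_RtoC_m1 : Cmod (RtoC (-1)) = 1.
Proof. rewrite Cmod_R, Rabs_left; lra. Qed.

Lemma Cmod_sub_pos (z a : C) : z <> a -> 0 < Cmod (z - a).
Proof.
  intros Hza. apply Cmod_gt_0. intros E. apply Hza.
  replace z with ((z - a) + a)%C by ring. rewrite E. ring.
Qed.

Definition radius_ge1 (c : nat -> C) : Prop :=
  forall rho, 0 <= rho < 1 -> exists M, forall k, Cmod (c k) * rho ^ k <= M.

Definition mulX (X : nat -> C) (k : nat) : C := match k with O => 0%C | S j => X j end.

Definition mul_lin (u v : C) (X : nat -> C) (k : nat) : C := (u * X k + v * mulX X k)%C.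

Lemma mul_lin_comm u v u' v' X : mul_lin u v (mul_lin u' v' X) = mul_lin u' v' (mul_lin u v X).
Proof. apply functional_extensionality. intros [|k]; unfold mul_lin; simpl; ring. Qed.

Lemma radius_ge1_mulX X : radius_ge1 X -> radius_ge1 (mulX X).
Proof.
  intros H rho Hr. destruct (H rho Hr) as [M HM]. exists M. intros [|k]; simpl.
  - rewrite Cmod_0. specialize (HM O). simpl in HM. pose proof (Cmod_ge_0 (X O)). lra.
  - specialize (HM k). pose proof (Cmod_ge_0 (X k)). pose proof (pow_le rho k (proj1 Hr)).
    assert (Cmod (X k) * (rho * rho ^ k) <= Cmod (X k) * rho ^ k) by (apply Rmult_le_compat_l; nra).
    lra.
Qed.

Lemma radius_ge1_scal u X : radius_ge1 X -> radius_ge1 (fun k => (u * X k)%C).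
Proof.
  intros H rho Hr. destruct (H rho Hr) as [M HM]. exists (Cmod u * M). intros k.
  rewrite Cmod_mult, Rmult_assoc. apply Rmult_le_compat_l; [apply Cmod_ge_0|apply HM].
Qed.

Lemma radius_ge1_add X Y : radius_ge1 X -> radius_ge1 Y -> radius_ge1 (fun k => (X k + Y k)%C).
Proof.
  intros H1 H2 rho Hr. destruct (H1 rho Hr) as [M1 HM1]. destruct (H2 rho Hr) as [M2 HM2].
  exists (M1 + M2). intros k. specialize (HM1 k). specialize (HM2 k).
  pose proof (Cmod_triangle (X k) (Y k)). pose proof (pow_le rho k (proj1 Hr)). nra.
Qed.

Lemma radius_ge1_mul_lin u v X : radius_ge1 X -> radius_ge1 (mul_lin u v X).
Proof.
  intros H. apply radius_ge1_add; apply radius_ge1_scal; [|apply radius_ge1_mulX]; exact H.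
Qed.

Lemma radius_ge1_finite (X : nat -> C) n : (forall k, (n < k)%nat -> X k = 0%C) -> radius_ge1 X.
Proof.
  intros H rho Hr. exists (sum_f_R0 (fun j => Cmod (X j)) n). intros k.
  assert (Hsum : forall j, (j <= n)%nat -> Cmod (X j) <= sum_f_R0 (fun j => Cmod (X j)) n).
  { clear H. intros j Hj. induction n as [|n IH].
    - replace j with O by lia. simpl. lra.
    - simpl. pose proof (Cmod_ge_0 (X (S n))).
      destruct (Nat.eq_dec j (S n)) as [->|Hne].
      + pose proof (cond_pos_sum (fun j => Cmod (X j)) n (fun j => Cmod_ge_0 (X j))). lra.
      + assert (Cmod (X j) <= sum_f_R0 (fun j => Cmod (X j)) n) by (apply IH; lia).
        lra. }
  pose proof (pow_le rho k (proj1 Hr)).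
  assert (rho ^ k <= 1) by (rewrite <- (pow1 k); apply pow_incr; lra).
  destruct (Nat.le_gt_cases k n) as [Hk|Hk].
  - pose proof (Hsum k Hk). pose proof (Cmod_ge_0 (X k)). nra.
  - rewrite H, Cmod_0, Rmult_0_l by exact Hk. apply (Rle_trans _ _ _ (Cmod_ge_0 (X O))), Hsum. lia.
Qed.

(** * L^2 norms on circles *)

Definition wsq (rho : R) (c : nat -> C) (k : nat) : R := (Cmod (c k) * rho ^ k) ^ 2.

(* By Parseval, [wnorm rho c] is the L^2 norm of [sum_k c k z^k] on the circle [|z| = rho]. *)
Definition wnorm (rho : R) (c : nat -> C) : R := sqrt (Series (wsq rho c)).

Lemma wsq_ge0 rho c k : 0 <= wsq rho c k.
Proof. apply pow2_ge_0. Qed.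

Lemma ex_series_wsq c rho : radius_ge1 c -> 0 <= rho < 1 -> ex_series (wsq rho c).
Proof.
  intros Hc Hr. set (r' := (1 + rho) / 2). set (q := rho / r').
  destruct (Hc r' ltac:(unfold r'; lra)) as [M HM].
  assert (Hq : 0 <= q < 1).
  { unfold q, r'. split; [apply Rdiv_le_0_compat; lra|].
    apply Rmult_lt_reg_r with ((1 + rho) / 2); [lra|]. field_simplify; lra. }
  apply (@ex_series_le R_AbsRing R_CompleteNormedModule _ (fun k => M ^ 2 * (q ^ 2) ^ k)).
  - intros k. change (norm (wsq rho c k)) with (Rabs (wsq rho c k)).
    rewrite Rabs_pos_eq by apply wsq_ge0. unfold wsq.
    assert (Hk : Cmod (c k) * rho ^ k <= M * q ^ k).
    { replace (rho ^ k) with (r' ^ k * q ^ k)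
        by (rewrite <- Rpow_mult_distr; f_equal; unfold q, r'; field; lra).
      rewrite <- Rmult_assoc. apply Rmult_le_compat_r; [apply pow_le; lra|apply HM]. }
    assert (0 <= Cmod (c k) * rho ^ k) by (apply Rmult_le_pos; [apply Cmod_ge_0|apply pow_le; lra]).
    rewrite <- pow_mult, Nat.mul_comm, pow_mult.
    replace (M ^ 2 * (q ^ k) ^ 2) with ((M * q ^ k) ^ 2) by ring.
    apply pow_incr; lra.
  - eexists. apply (@is_series_scal_l R_AbsRing R_NormedModule (M ^ 2) (fun k => (q ^ 2) ^ k)).
    apply is_series_geom. rewrite Rabs_pos_eq by nra. nra.
Qed.

Lemma Series_ge0 (a : nat -> R) : (forall n, 0 <= a n) -> ex_series a -> 0 <= Series a.
Proof.
  intros H Ha. apply Rle_trans with (Series (fun n => 0 * a n)).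
  - rewrite Series_scal_l. lra.
  - apply Series_le; [|exact Ha]. intros n. rewrite Rmult_0_l. split; [lra|apply H].
Qed.

Lemma ex_series_Rscal (c : R) (a : nat -> R) : ex_series a -> ex_series (fun n => c * a n).
Proof. exact (ex_series_scal_l c a). Qed.

Lemma Series_ge_term (a : nat -> R) k : (forall n, 0 <= a n) -> ex_series a -> a k <= Series a.
Proof.
  intros H Ha. rewrite (Series_incr_n a (S k)) by (lia || auto). simpl pred.
  assert (Hk : a k <= sum_f_R0 a k).
  { destruct k; simpl; [lra|]. pose proof (cond_pos_sum a k H). lra. }
  assert (0 <= Series (fun j => a (S k + j)%nat)).
  { apply Series_ge0; [intros n; apply H|apply (ex_series_incr_n a (S k)), Ha]. }
  lra.
Qed.

Lemma coef_le_wnorm rho c k : radius_ge1 c -> 0 <= rho < 1 -> Cmod (c k) * rho ^ k <= wnorm rho c.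
Proof.
  intros Hc Hr. unfold wnorm.
  rewrite <- (sqrt_pow2 (Cmod (c k) * rho ^ k))
    by (apply Rmult_le_pos; [apply Cmod_ge_0|apply pow_le; lra]).
  apply sqrt_le_1_alt, (Series_ge_term (wsq rho c) k); [apply wsq_ge0|apply ex_series_wsq; auto].
Qed.

Lemma wnorm_scal rho u X : wnorm rho (fun k => (u * X k)%C) = Cmod u * wnorm rho X.
Proof.
  unfold wnorm. rewrite <- (sqrt_pow2 (Cmod u)) by apply Cmod_ge_0.
  rewrite <- sqrt_mult_alt by apply pow2_ge_0. f_equal.
  rewrite <- Series_scal_l. apply Series_ext. intros k. unfold wsq. rewrite Cmod_mult. ring.
Qed.

Lemma wnorm_opp rho X : wnorm rho (fun k => (RtoC (-1) * X k)%C) = wnorm rho X.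
Proof. rewrite wnorm_scal, Cmod_RtoC_m1. ring. Qed.

Lemma wnorm_mulX rho X : 0 <= rho -> wnorm rho (mulX X) = rho * wnorm rho X.
Proof.
  intros Hr. unfold wnorm. rewrite <- (sqrt_pow2 rho) at 2 by exact Hr.
  rewrite <- sqrt_mult_alt by apply pow2_ge_0. f_equal.
  rewrite Series_incr_1_aux by (unfold wsq; simpl; rewrite Cmod_0; ring).
  rewrite <- Series_scal_l. apply Series_ext. intros k. unfold wsq. simpl. ring.
Qed.

Lemma wnorm_add rho X Y : radius_ge1 X -> radius_ge1 Y -> 0 <= rho < 1 ->
  wnorm rho (fun k => (X k + Y k)%C) <= wnorm rho X + wnorm rho Y.
Proof.
  intros HX HY Hr. unfold wnorm.
  rewrite <- (sqrt_pow2 (sqrt (Series (wsq rho X)) + sqrt (Series (wsq rho Y))))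
    by (pose proof (sqrt_pos (Series (wsq rho X))); pose proof (sqrt_pos (Series (wsq rho Y))); lra).
  apply sqrt_le_1_alt, le_sq_add_of_split; try apply sqrt_pos.
  intros t Ht.
  rewrite !pow2_sqrt by (apply Series_ge0; [apply wsq_ge0|apply ex_series_wsq; auto]).
  rewrite <- !Series_scal_l, <- Series_plus
    by (apply ex_series_Rscal, ex_series_wsq; auto).
  apply Series_le.
  - intros k. split; [apply wsq_ge0|]. unfold wsq. rewrite !Rpow_mult_distr.
    pose proof (Cmod_add_sq_le (X k) (Y k) t Ht). pose proof (pow2_ge_0 (rho ^ k)). nra.
  - exact (ex_series_plus _ _ (ex_series_Rscal _ _ (ex_series_wsq _ _ HX Hr))
      (ex_series_Rscal _ _ (ex_series_wsq _ _ HY Hr))).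
Qed.

Lemma wnorm_mul_lin_le rho u v X : radius_ge1 X -> 0 <= rho < 1 ->
  wnorm rho (mul_lin u v X) <= (Cmod u + Cmod v * rho) * wnorm rho X.
Proof.
  intros HX Hr. unfold mul_lin.
  eapply Rle_trans; [apply wnorm_add; auto|].
  - apply radius_ge1_scal; exact HX.
  - apply radius_ge1_scal, radius_ge1_mulX; exact HX.
  - rewrite !wnorm_scal, wnorm_mulX by lra. right; ring.
Qed.

Lemma wnorm_mul_lin_ge rho u v X : radius_ge1 X -> 0 <= rho < 1 ->
  (Cmod u - Cmod v * rho) * wnorm rho X <= wnorm rho (mul_lin u v X).
Proof.
  intros HX Hr.
  assert (E : (fun k => (u * X k)%C) = (fun k => (mul_lin u v X k + (- v) * mulX X k)%C)).
  { apply functional_extensionality. intros k. unfold mul_lin. ring. }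
  assert (H : wnorm rho (fun k => (u * X k)%C)
              <= wnorm rho (mul_lin u v X) + wnorm rho (fun k => (- v * mulX X k)%C)).
  { rewrite E. apply wnorm_add; auto.
    - apply radius_ge1_mul_lin; exact HX.
    - apply radius_ge1_scal, radius_ge1_mulX; exact HX. }
  rewrite !wnorm_scal, wnorm_mulX, Cmod_opp in H by lra. lra.
Qed.

Lemma wnorm_le_radius r1 r2 X : radius_ge1 X -> 0 <= r1 <= r2 -> r2 < 1 ->
  wnorm r1 X <= wnorm r2 X.
Proof.
  intros HX Hr Hr2. apply sqrt_le_1_alt, Series_le.
  - intros k. split; [apply wsq_ge0|]. unfold wsq. apply pow_incr. split.
    + apply Rmult_le_pos; [apply Cmod_ge_0|apply pow_le; lra].
    + apply Rmult_le_compat_l; [apply Cmod_ge_0|apply pow_incr; lra].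
  - apply ex_series_wsq; auto. lra.
Qed.

(* The last term sums to zero: [wsq R (mulX X)] is [R^2 wsq R X] shifted by one. *)
Lemma wsq_blaschke_factor R a X k :
  wsq R (mul_lin (RtoC (R ^ 2)) (- Cconj a) X) k =
  R ^ 2 * wsq R (mul_lin (- a) 1 X) k + (R ^ 2 - Cmod a ^ 2) * (R ^ 2 * wsq R X k - wsq R (mulX X) k).
Proof.
  assert (Hsq : forall z : C, Cmod z ^ 2 = fst z ^ 2 + snd z ^ 2).
  { intros z. unfold Cmod. rewrite pow2_sqrt; [reflexivity|nra]. }
  unfold wsq, mul_lin. rewrite !Rpow_mult_distr, !Hsq.
  destruct a as [a1 a2]. destruct k as [|k]; simpl mulX.
  - destruct (X O) as [x1 x2]. simpl. ring.
  - destruct (X (S k)) as [x1 x2]. destruct (X k) as [y1 y2]. simpl. ring.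
Qed.

(* On [|z| = R] one has [|R^2 - conj a z| = R |z - a|]. *)
Lemma wnorm_blaschke_factor R a X : radius_ge1 X -> 0 <= R < 1 ->
  wnorm R (mul_lin (RtoC (R ^ 2)) (- Cconj a) X) = R * wnorm R (mul_lin (- a) 1 X).
Proof.
  intros HX HR. unfold wnorm at 1. rewrite (Series_ext _ _ (wsq_blaschke_factor R a X)).
  assert (E1 : ex_series (wsq R (mul_lin (- a) 1 X)))
    by (apply ex_series_wsq; auto; apply radius_ge1_mul_lin; auto).
  assert (E2 : ex_series (wsq R X)) by (apply ex_series_wsq; auto).
  assert (E3 : ex_series (wsq R (mulX X))) by (apply ex_series_wsq; auto; apply radius_ge1_mulX; auto).
  assert (Hshift : Series (wsq R (mulX X)) = R ^ 2 * Series (wsq R X)).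
  { rewrite Series_incr_1_aux by (unfold wsq; simpl; rewrite Cmod_0; ring).
    rewrite <- Series_scal_l. apply Series_ext. intros k. unfold wsq. simpl. ring. }
  rewrite Series_plus, !Series_scal_l, Series_minus, Series_scal_l, Hshift.
  - replace (R ^ 2 * Series (wsq R (mul_lin (- a) 1 X)) + (R ^ 2 - Cmod a ^ 2) *
      (R ^ 2 * Series (wsq R X) - R ^ 2 * Series (wsq R X)))
      with (R ^ 2 * Series (wsq R (mul_lin (- a) 1 X))) by ring.
    rewrite sqrt_mult_alt, sqrt_pow2 by (lra || apply pow2_ge_0). reflexivity.
  - exact (ex_series_Rscal _ _ E2).
  - exact E3.
  - exact (ex_series_Rscal _ _ E1).
  - exact (ex_series_Rscal _ _ (ex_series_minus _ _ (ex_series_Rscal _ _ E2) E3)).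
Qed.

(** * Zeros and Blaschke factors *)

(* coefficients of [W(z) prod_(a in A) (z - a)] and of [W(z) prod_(a in A) (R^2 - conj a z)] *)
Definition mul_roots (A : list C) (W : nat -> C) : nat -> C :=
  fold_right (fun a X => mul_lin (- a) 1 X) W A.

Definition mul_blaschke (R : R) (A : list C) (W : nat -> C) : nat -> C :=
  fold_right (fun a X => mul_lin (RtoC (R ^ 2)) (- Cconj a) X) W A.

Lemma mul_roots_mul_lin A u v W : mul_roots A (mul_lin u v W) = mul_lin u v (mul_roots A W).
Proof. induction A as [|a A IH]; simpl; [reflexivity|]. rewrite IH, mul_lin_comm. reflexivity. Qed.

Lemma mul_blaschke_mul_lin R A u v W :
  mul_blaschke R A (mul_lin u v W) = mul_lin u v (mul_blaschke R A W).
Proof. induction A as [|a A IH]; simpl; [reflexivity|]. rewrite IH, mul_lin_comm. reflexivity. Qed.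

Lemma mul_roots_app A B W : mul_roots (A ++ B) W = mul_roots A (mul_roots B W).
Proof. apply fold_right_app. Qed.

Lemma radius_ge1_mul_roots A W : radius_ge1 W -> radius_ge1 (mul_roots A W).
Proof. induction A; simpl; auto using radius_ge1_mul_lin. Qed.

Lemma radius_ge1_mul_blaschke R A W : radius_ge1 W -> radius_ge1 (mul_blaschke R A W).
Proof. induction A; simpl; auto using radius_ge1_mul_lin. Qed.

Lemma wnorm_mul_blaschke R A W : radius_ge1 W -> 0 <= R < 1 ->
  wnorm R (mul_blaschke R A W) = R ^ length A * wnorm R (mul_roots A W).
Proof.
  revert W. induction A as [|a A IH]; intros W HW HR; simpl; [ring|].
  rewrite <- mul_blaschke_mul_lin, IH by (auto using radius_ge1_mul_lin).
  rewrite mul_roots_mul_lin, wnorm_blaschke_factor by (auto using radius_ge1_mul_roots).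
  ring.
Qed.

(* On [|z| = rho], each factor [z - a] is at most [(|a| + rho) / (R^2 - |a| rho)] times
   [R^2 - conj a z]. *)
Lemma wnorm_mul_roots_le_blaschke R rho r A W : radius_ge1 W -> 0 <= rho < 1 -> 0 <= r ->
  r * rho < R ^ 2 -> (forall a, In a A -> Cmod a <= r) ->
  wnorm rho (mul_roots A W)
    <= ((rho + r) / (R ^ 2 - r * rho)) ^ length A * wnorm rho (mul_blaschke R A W).
Proof.
  intros HW Hr Hr0 HrR. revert W HW. induction A as [|a A IH]; intros W HW HA; [simpl; lra|].
  set (c := (rho + r) / (R ^ 2 - r * rho)) in *.
  change (mul_roots (a :: A) W) with (mul_lin (- a) 1 (mul_roots A W)).
  change (length (a :: A)) with (Datatypes.S (length A)). rewrite <- tech_pow_Rmult.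
  set (Y := mul_roots A W). set (B := wnorm rho (mul_blaschke R (a :: A) W)).
  assert (HY : radius_ge1 Y) by (apply radius_ge1_mul_roots; exact HW).
  assert (Ha : 0 <= Cmod a <= r) by (split; [apply Cmod_ge_0|apply HA; left; reflexivity]).
  assert (Hfactor : Cmod a + rho <= c * (R ^ 2 - Cmod a * rho)).
  { assert (Hc : c * (R ^ 2 - r * rho) = rho + r) by (unfold c; field; lra).
    assert (c * (R ^ 2 - r * rho) <= c * (R ^ 2 - Cmod a * rho)).
    { apply Rmult_le_compat_l; [apply Rdiv_le_0_compat|]; nra. }
    lra. }
  assert (Hup : wnorm rho (mul_lin (- a) 1 Y) <= (Cmod a + rho) * wnorm rho Y).
  { eapply Rle_trans; [apply wnorm_mul_lin_le; auto|]. rewrite Cmod_opp, Cmod_1. right; ring. }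
  assert (Hlow : (R ^ 2 - Cmod a * rho) * wnorm rho Y <= c ^ length A * B).
  { eapply Rle_trans.
    - pose proof (wnorm_mul_lin_ge rho (RtoC (R ^ 2)) (- Cconj a) Y HY Hr) as H.
      rewrite Cmod_opp, Cmod_conj, Cmod_RtoC_nonneg in H by apply pow2_ge_0. exact H.
    - unfold Y, B. rewrite <- mul_roots_mul_lin. simpl. rewrite <- mul_blaschke_mul_lin.
      apply IH; [apply radius_ge1_mul_lin; exact HW|intros b Hb; apply HA; right; exact Hb]. }
  assert (0 <= c) by (apply Rdiv_le_0_compat; lra).
  assert (0 <= wnorm rho Y) by apply sqrt_pos.
  eapply Rle_trans; [exact Hup|].
  apply Rle_trans with (c * ((R ^ 2 - Cmod a * rho) * wnorm rho Y)).
  - rewrite <- Rmult_assoc. apply Rmult_le_compat_r; assumption.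
  - rewrite Rmult_assoc. apply Rmult_le_compat_l; assumption.
Qed.

Definition shrink_ratio (r R1 R2 : R) : R := (R1 + r) / (R2 ^ 2 - r * R1) * R2.

(* A Schwarz-type lemma, obtained by comparing with the Blaschke products. *)
Lemma wnorm_mul_roots_shrink R1 R2 r A W : radius_ge1 W -> 0 <= r -> 0 <= R1 <= R2 -> R2 < 1 ->
  r * R1 < R2 ^ 2 -> (forall a, In a A -> Cmod a <= r) ->
  wnorm R1 (mul_roots A W) <= shrink_ratio r R1 R2 ^ length A * wnorm R2 (mul_roots A W).
Proof.
  intros HW Hr HR12 HR2 HrR HA.
  set (c := (R1 + r) / (R2 ^ 2 - r * R1)).
  assert (Hc : 0 <= c) by (apply Rdiv_le_0_compat; lra).
  eapply Rle_trans; [apply (wnorm_mul_roots_le_blaschke R2); auto; lra|]. fold c.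
  eapply Rle_trans.
  - apply Rmult_le_compat_l; [apply pow_le; exact Hc|].
    apply (wnorm_le_radius R1 R2); [apply radius_ge1_mul_blaschke; exact HW|lra|exact HR2].
  - rewrite wnorm_mul_blaschke by (auto; lra). unfold shrink_ratio. fold c.
    rewrite Rpow_mult_distr. right; ring.
Qed.

(** * Evaluation and division by [z - a] *)

Notation is_Cseries := (@is_series C_AbsRing C_NormedModule).
Notation ex_Cseries := (@ex_series C_AbsRing C_NormedModule).

(* junk value when [a] is not summable *)
Definition Cseries (a : nat -> C) : C := epsilon (inhabits (RtoC 0)) (fun l : C => is_Cseries a l).

Lemma Cseries_correct a : ex_Cseries a -> is_Cseries a (Cseries a).
Proof. exact (epsilon_spec (inhabits (RtoC 0)) (fun l : C => is_Cseries a l)). Qed.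

Lemma is_Cseries_unique (a : nat -> C) (l1 l2 : C) : is_Cseries a l1 -> is_Cseries a l2 -> l1 = l2.
Proof.
  apply (@filterlim_locally_unique nat C_AbsRing C_NormedModule eventually
    (Proper_StrongProper _ eventually_filter) (sum_n a)).
Qed.

Lemma is_Cseries_ext (a b : nat -> C) (l : C) : (forall n, a n = b n) -> is_Cseries a l -> is_Cseries b l.
Proof. exact (is_series_ext a b l). Qed.

Lemma is_Cseries_plus (a b : nat -> C) (la lb : C) : is_Cseries a la -> is_Cseries b lb ->
  is_Cseries (fun n => (a n + b n)%C) (la + lb)%C.
Proof. exact (is_series_plus a b la lb). Qed.

Lemma is_Cseries_scal (c : C) (a : nat -> C) (l : C) :
  is_Cseries a l -> is_Cseries (fun n => (c * a n)%C) (c * l)%C.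
Proof. exact (@is_series_scal_l C_AbsRing C_NormedModule c a l). Qed.

Lemma is_Cseries_tail (a : nat -> C) (l : C) : is_Cseries a l -> is_Cseries (fun k => a (S k)) (l - a O)%C.
Proof.
  intros H. apply (@is_series_incr_1 C_AbsRing C_NormedModule a (l - a O)%C).
  change (is_Cseries a (Cplus (Cminus l (a O)) (a O))).
  replace (Cplus (Cminus l (a O)) (a O)) with l by ring. exact H.
Qed.

Lemma is_Cseries_cons (a : nat -> C) (l : C) : is_Cseries (fun k => a (S k)) l -> is_Cseries a (l + a O)%C.
Proof.
  intros H. apply (@is_series_decr_1 C_AbsRing C_NormedModule a (l + a O)%C).
  change (is_Cseries (fun k => a (S k)) (Cplus (Cplus l (a O)) (Copp (a O)))).
  replace (Cplus (Cplus l (a O)) (Copp (a O))) with l by ring. exact H.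
Qed.

Lemma is_Cseries_finite (a : nat -> C) n : (forall k, (n < k)%nat -> a k = 0%C) ->
  is_Cseries a (sum_n a n).
Proof.
  intros H. apply (filterlim_ext_loc (fun _ => sum_n a n)); [|apply filterlim_const].
  exists n. intros m Hm. induction Hm as [|m Hm IH]; [reflexivity|].
  rewrite sum_Sn, <- IH, H by lia.
  change (sum_n a n = Cplus (sum_n a n) (RtoC 0)). symmetry. apply Cplus_0_r.
Qed.

Lemma Cmod_le_of_is_series_le (a : nat -> C) (b : nat -> R) l L : is_Cseries a l -> is_series b L ->
  (forall k, Cmod (a k) <= b k) -> Cmod l <= L.
Proof.
  intros Ha Hb Hab.
  assert (Hp : forall n, Cmod (sum_n a n) <= sum_n b n).
  { induction n as [|n IH]; [rewrite !sum_O; apply Hab|].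
    rewrite !sum_Sn. change (plus (sum_n a n) (a (S n))) with (Cplus (sum_n a n) (a (S n))).
    eapply Rle_trans; [apply Cmod_triangle|].
    change (plus (sum_n b n) (b (S n))) with (sum_n b n + b (S n)).
    specialize (Hab (S n)). lra. }
  change (Cmod l) with (@norm C_AbsRing C_NormedModule l).
  apply (filterlim_le (F := eventually) (fun n => norm (sum_n a n)) (sum_n b) (norm l) L).
  - apply filter_forall. exact Hp.
  - apply (filterlim_comp _ _ _ (sum_n a) norm eventually (locally l)); [exact Ha|apply filterlim_norm].
  - exact Hb.
Qed.

Lemma is_Cseries_terms_bounded (a : nat -> C) l : is_Cseries a l -> exists M, forall k, Cmod (a k) <= M.
Proof.
  intros H. destruct (filterlim_bounded (K := C_AbsRing) (V := C_NormedModule) (sum_n a)) as [M HM].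
  { exists l. exact H. }
  exists (2 * M). intros [|k].
  - specialize (HM O). rewrite sum_O in HM. change (norm (a O)) with (Cmod (a O)) in HM.
    pose proof (Cmod_ge_0 (a O)). lra.
  - pose proof (HM k) as H1. pose proof (HM (S k)) as H2. rewrite sum_Sn in H2.
    change (norm (sum_n a k)) with (Cmod (sum_n a k)) in H1.
    change (norm (plus (sum_n a k) (a (S k)))) with (Cmod (Cplus (sum_n a k) (a (S k)))) in H2.
    replace (a (S k)) with (Cplus (Cplus (sum_n a k) (a (S k))) (Copp (sum_n a k))) by ring.
    eapply Rle_trans; [apply Cmod_triangle|]. rewrite Cmod_opp. lra.
Qed.

Lemma Cseries_geom_bound (a : nat -> C) (M q : R) : 0 <= q < 1 -> (forall k, Cmod (a k) <= M * q ^ k) ->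
  ex_Cseries a /\ Cmod (Cseries a) <= M / (1 - q).
Proof.
  intros Hq H.
  assert (Hgeom : is_series (fun k => M * q ^ k) (M / (1 - q))).
  { apply (@is_series_scal_l R_AbsRing R_NormedModule M (fun k => q ^ k)).
    apply is_series_geom. rewrite Rabs_pos_eq; lra. }
  assert (Hex : ex_Cseries a).
  { apply (@ex_series_le C_AbsRing C_CompleteNormedModule a (fun k => M * q ^ k)); [exact H|].
    eexists; exact Hgeom. }
  split; [exact Hex|]. exact (Cmod_le_of_is_series_le _ _ _ _ (Cseries_correct a Hex) Hgeom H).
Qed.

Lemma radius_ge1_coef_bound c rho : radius_ge1 c -> 0 < rho < 1 ->
  exists M, 0 <= M /\ forall k, Cmod (c k) <= M / rho ^ k.
Proof.
  intros Hc Hr. destruct (Hc rho ltac:(lra)) as [M HM].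
  exists M. split; [specialize (HM O); simpl in HM; pose proof (Cmod_ge_0 (c O)); lra|].
  intros k. specialize (HM k). assert (0 < rho ^ k) by (apply pow_lt; lra).
  apply (Rmult_le_reg_r (rho ^ k)); [assumption|]. field_simplify; lra.
Qed.

Definition peval (c : nat -> C) (z : C) : C := Cseries (fun k => (c k * z ^ k)%C).

Lemma peval_bounded c rho0 : radius_ge1 c -> 0 <= rho0 < 1 -> exists B, forall z, Cmod z <= rho0 ->
  ex_Cseries (fun k => (c k * z ^ k)%C) /\ Cmod (peval c z) <= B.
Proof.
  intros Hc Hr. set (r' := (1 + rho0) / 2). set (q := rho0 / r').
  destruct (radius_ge1_coef_bound c r' Hc) as [M [HM0 HM]]; [unfold r'; lra|].
  assert (Hq : 0 <= q < 1).
  { unfold q, r'. split; [apply Rdiv_le_0_compat; lra|].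
    apply (Rmult_lt_reg_r ((1 + rho0) / 2)); [lra|]. field_simplify; lra. }
  exists (M / (1 - q)). intros z Hz. apply Cseries_geom_bound; [exact Hq|]. intros k.
  rewrite Cmod_mult, Cmod_pow.
  replace (M * q ^ k) with (M / r' ^ k * rho0 ^ k)
    by (unfold q, Rdiv; rewrite Rpow_mult_distr, pow_inv; field; apply pow_nonzero; unfold r'; lra).
  apply Rmult_le_compat; [apply Cmod_ge_0|apply pow_le, Cmod_ge_0|apply HM|].
  apply pow_incr. split; [apply Cmod_ge_0|exact Hz].
Qed.

Lemma peval_correct c z : radius_ge1 c -> Cmod z < 1 -> is_Cseries (fun k => (c k * z ^ k)%C) (peval c z).
Proof.
  intros Hc Hz. destruct (peval_bounded c (Cmod z) Hc) as [B HB]; [split; [apply Cmod_ge_0|exact Hz]|].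
  apply Cseries_correct, (HB z (Rle_refl _)).
Qed.

Lemma peval_unique c z l : radius_ge1 c -> Cmod z < 1 -> is_Cseries (fun k => (c k * z ^ k)%C) l ->
  peval c z = l.
Proof. intros Hc Hz. apply is_Cseries_unique, peval_correct; assumption. Qed.

Lemma peval_add X Y z : radius_ge1 X -> radius_ge1 Y -> Cmod z < 1 ->
  peval (fun k => (X k + Y k)%C) z = (peval X z + peval Y z)%C.
Proof.
  intros HX HY Hz. apply peval_unique; [apply radius_ge1_add; assumption|exact Hz|].
  apply (is_Cseries_ext (fun k => (X k * z ^ k + Y k * z ^ k)%C)); [intros; ring|].
  apply is_Cseries_plus; apply peval_correct; assumption.
Qed.

Lemma peval_scal u X z : radius_ge1 X -> Cmod z < 1 -> peval (fun k => (u * X k)%C) z = (u * peval X z)%C.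
Proof.
  intros HX Hz. apply peval_unique; [apply radius_ge1_scal; exact HX|exact Hz|].
  apply (is_Cseries_ext (fun k => (u * (X k * z ^ k))%C)); [intros; ring|].
  apply is_Cseries_scal, peval_correct; assumption.
Qed.

Lemma peval_mul_lin u v X z : radius_ge1 X -> Cmod z < 1 ->
  peval (mul_lin u v X) z = ((u + v * z) * peval X z)%C.
Proof.
  intros HX Hz. apply peval_unique; [apply radius_ge1_mul_lin; exact HX|exact Hz|].
  apply (is_Cseries_ext (fun k => (u * (X k * z ^ k) + v * (mulX X k * z ^ k))%C));
    [intros; unfold mul_lin; ring|].
  replace ((u + v * z) * peval X z)%C with (u * peval X z + v * (z * peval X z))%C by ring.
  apply is_Cseries_plus; apply is_Cseries_scal; [apply peval_correct; assumption|].
  replace (z * peval X z)%C with (z * peval X z + mulX X O * z ^ O)%C by (simpl; ring).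
  apply is_Cseries_cons.
  apply (is_Cseries_ext (fun k => (z * (X k * z ^ k))%C)); [intros; simpl; ring|].
  apply is_Cseries_scal, peval_correct; assumption.
Qed.

Definition const_seq (x : C) (k : nat) : C := match k with O => x | S _ => RtoC 0 end.

Lemma radius_ge1_const x : radius_ge1 (const_seq x).
Proof. apply (radius_ge1_finite _ O). intros [|k] Hk; [lia|reflexivity]. Qed.

Lemma peval_const x z : Cmod z < 1 -> peval (const_seq x) z = x.
Proof.
  intros Hz. apply peval_unique; [apply radius_ge1_const|exact Hz|].
  assert (H := is_Cseries_finite (fun k => (const_seq x k * z ^ k)%C) O
    ltac:(intros [|k] Hk; [lia|simpl; ring])).
  rewrite sum_O in H. replace (const_seq x 0 * z ^ 0)%C with x in H by (simpl; ring). exact H.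
Qed.

(* coefficients of [(g(z) - g(a)) / (z - a)], where [g] has coefficients [c] *)
Definition div_root (c : nat -> C) (a : C) (k : nat) : C := Cseries (fun i => (c (S (k + i)) * a ^ i)%C).

Lemma div_root_bound c a rho' : radius_ge1 c -> Cmod a < rho' -> rho' < 1 ->
  exists M, 0 <= M /\ forall k, ex_Cseries (fun i => (c (S (k + i)) * a ^ i)%C) /\
    Cmod (div_root c a k) <= M / rho' ^ S k / (1 - Cmod a / rho').
Proof.
  intros Hc Ha Hr. pose proof (Cmod_ge_0 a).
  destruct (radius_ge1_coef_bound c rho' Hc) as [M [HM0 HM]]; [lra|].
  exists M. split; [exact HM0|]. intros k.
  assert (Hq : 0 <= Cmod a / rho' < 1).
  { split; [apply Rdiv_le_0_compat; lra|]. apply (Rmult_lt_reg_r rho'); [lra|]. field_simplify; lra. }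
  apply (Cseries_geom_bound _ (M / rho' ^ S k) (Cmod a / rho')); [exact Hq|].
  intros i. rewrite Cmod_mult, Cmod_pow.
  replace (M / rho' ^ S k * (Cmod a / rho') ^ i) with (M / rho' ^ S (k + i) * Cmod a ^ i).
  - apply Rmult_le_compat_r; [apply pow_le; lra|apply HM].
  - unfold Rdiv. rewrite Rpow_mult_distr, pow_inv. replace (S (k + i)) with (S k + i)%nat by lia.
    rewrite pow_add. field. split; apply pow_nonzero; lra.
Qed.

Lemma radius_ge1_div_root c a : radius_ge1 c -> Cmod a < 1 -> radius_ge1 (div_root c a).
Proof.
  intros Hc Ha rho Hr. pose proof (Cmod_ge_0 a).
  set (rho' := (1 + Rmax rho (Cmod a)) / 2).
  assert (Hmax := Rmax_lub_lt rho (Cmod a) 1 ltac:(lra) Ha).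
  assert (H1 : Cmod a < rho') by (unfold rho'; pose proof (Rmax_r rho (Cmod a)); lra).
  assert (H2 : rho < rho') by (unfold rho'; pose proof (Rmax_l rho (Cmod a)); lra).
  assert (H3 : rho' < 1) by (unfold rho'; lra).
  destruct (div_root_bound c a rho' Hc H1 H3) as [M [HM0 HM]].
  assert (Hq : 0 < 1 - Cmod a / rho').
  { assert (Cmod a / rho' < 1) by (apply (Rmult_lt_reg_r rho'); [lra|]; field_simplify; lra). lra. }
  exists (M / rho' / (1 - Cmod a / rho')). intros k. destruct (HM k) as [_ Hk].
  apply Rle_trans with (M / rho' ^ S k / (1 - Cmod a / rho') * rho' ^ k).
  - apply Rmult_le_compat; [apply Cmod_ge_0|apply pow_le; lra|exact Hk|apply pow_incr; lra].
  - right. simpl. field. repeat split; try apply pow_nonzero; lra.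
Qed.

Lemma div_root_rec c a : radius_ge1 c -> Cmod a < 1 ->
  peval c a = (c O + a * div_root c a O)%C /\
  forall j, div_root c a j = (c (S j) + a * div_root c a (S j))%C.
Proof.
  intros Hc Ha. pose proof (Cmod_ge_0 a) as Ha0.
  destruct (div_root_bound c a ((1 + Cmod a) / 2) Hc) as [M [_ HM]]; try lra.
  split.
  - pose proof (is_Cseries_tail _ _ (peval_correct c a Hc Ha)) as H.
    pose proof (is_Cseries_scal a _ _ (Cseries_correct _ (proj1 (HM O)))) as H'.
    apply (is_Cseries_ext _ (fun i => (c (S i) * a ^ S i)%C)) in H'; [|intros i; simpl; ring].
    pose proof (is_Cseries_unique _ _ _ H H') as E. unfold div_root.
    rewrite <- E. simpl. ring.
  - intros j. pose proof (is_Cseries_tail _ _ (Cseries_correct _ (proj1 (HM j)))) as H.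
    pose proof (is_Cseries_scal a _ _ (Cseries_correct _ (proj1 (HM (S j))))) as H'.
    apply (is_Cseries_ext _ (fun i => (c (S (j + S i)) * a ^ S i)%C)) in H';
      [|intros i; replace (S j + i)%nat with (j + S i)%nat by lia; simpl; ring].
    pose proof (is_Cseries_unique _ _ _ H H') as E.
    unfold div_root at 2. rewrite <- E, Nat.add_0_r. unfold div_root. simpl. ring.
Qed.

Lemma div_root_spec c a : radius_ge1 c -> Cmod a < 1 ->
  c = (fun k => (mul_lin (- a) 1 (div_root c a) k + const_seq (peval c a) k)%C).
Proof.
  intros Hc Ha. destruct (div_root_rec c a Hc Ha) as [E0 ES].
  apply functional_extensionality. intros [|j]; unfold mul_lin; simpl.
  - rewrite E0. ring.
  - rewrite (ES j). ring.
Qed.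

Lemma peval_div_root c a z : radius_ge1 c -> Cmod a < 1 -> Cmod z < 1 ->
  peval c z = ((z - a) * peval (div_root c a) z + peval c a)%C.
Proof.
  intros Hc Ha Hz. pose proof (radius_ge1_div_root c a Hc Ha) as HD.
  rewrite (div_root_spec c a Hc Ha) at 1.
  rewrite peval_add, peval_mul_lin, peval_const;
    auto using radius_ge1_mul_lin, radius_ge1_const.
  ring.
Qed.

Lemma mul_lin_div_root c a : radius_ge1 c -> Cmod a < 1 -> peval c a = 0%C ->
  c = mul_lin (- a) 1 (div_root c a).
Proof.
  intros Hc Ha H0. rewrite (div_root_spec c a Hc Ha) at 1. rewrite H0.
  apply functional_extensionality. intros [|j]; simpl; ring.
Qed.

Lemma peval_lipschitz c rho0 a : radius_ge1 c -> 0 <= rho0 < 1 -> Cmod a <= rho0 ->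
  exists B, 0 <= B /\ forall z, Cmod z <= rho0 -> Cmod (peval c z - peval c a) <= B * Cmod (z - a).
Proof.
  intros Hc Hr Ha.
  destruct (peval_bounded (div_root c a) rho0 (radius_ge1_div_root c a Hc ltac:(lra)) Hr) as [B HB].
  exists (Rabs B). split; [apply Rabs_pos|]. intros z Hz.
  rewrite (peval_div_root c a z Hc) by lra.
  replace ((z - a) * peval (div_root c a) z + peval c a - peval c a)%C
    with ((z - a) * peval (div_root c a) z)%C by ring.
  rewrite Cmod_mult, Rmult_comm. destruct (HB z Hz) as [_ HBz].
  apply Rmult_le_compat_r; [apply Cmod_ge_0|]. pose proof (Rle_abs B). lra.
Qed.

Definition vanishes_to (c : nat -> C) (a : C) (m : nat) : Prop :=
  exists d M, 0 < d /\
    forall z, Cmod z < 1 -> Cmod (z - a) < d -> Cmod (peval c z) <= M * Cmod (z - a) ^ m.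

Lemma vanishes_to_root c a m : Cmod a < 1 -> vanishes_to c a (S m) -> peval c a = 0%C.
Proof.
  intros Ha [d [M [Hd H]]]. specialize (H a Ha).
  replace (a - a)%C with (RtoC 0) in H by ring. rewrite Cmod_0 in H. specialize (H Hd).
  simpl in H. rewrite Rmult_0_l, Rmult_0_r in H.
  apply Cmod_eq_0. pose proof (Cmod_ge_0 (peval c a)). lra.
Qed.

Lemma eq0_of_vanishing_near (F : C -> C) a d B M m : 0 < d -> (1 <= m)%nat ->
  (forall z, Cmod (z - a) < d -> z <> a -> Cmod (F z) <= M * Cmod (z - a) ^ m) ->
  (forall z, Cmod (z - a) < d -> Cmod (F z - F a) <= B * Cmod (z - a)) -> F a = 0%C.
Proof.
  intros Hd Hm Hvan Hlip. apply Cmod_eq_0, Rle_antisym; [|apply Cmod_ge_0].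
  apply (le0_of_le_mul_small _ (B + Rabs M) (Rmin d 1)); [apply Rmin_glb_lt; lra|].
  intros t [Ht Htd]. pose proof (Rmin_l d 1). pose proof (Rmin_r d 1).
  set (z := (a + RtoC t)%C).
  assert (Hzt : Cmod (z - a) = t).
  { unfold z. replace (a + RtoC t - a)%C with (RtoC t) by ring. apply Cmod_RtoC_nonneg; lra. }
  assert (Hza : z <> a) by (intros E; rewrite E in Hzt; replace (a - a)%C with (RtoC 0) in Hzt by ring;
    rewrite Cmod_0 in Hzt; lra).
  specialize (Hvan z ltac:(lra) Hza). specialize (Hlip z ltac:(lra)). rewrite Hzt in Hvan, Hlip.
  assert (Hpow : M * t ^ m <= Rabs M * t).
  { assert (0 <= t ^ m <= t).
    { destruct m as [|m]; [lia|]. simpl. pose proof (pow_le t m ltac:(lra)).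
      assert (t ^ m <= 1) by (rewrite <- (pow1 m); apply pow_incr; lra). nra. }
    pose proof (Rle_abs M). pose proof (Rabs_pos M). nra. }
  replace (F a) with (F z - (F z - F a))%C by ring.
  eapply Rle_trans; [apply Cmod_triangle|]. rewrite Cmod_opp. lra.
Qed.

Lemma div_root_bound_off_root c a m d M : radius_ge1 c -> Cmod a < 1 -> peval c a = 0%C ->
  (forall z, Cmod z < 1 -> Cmod (z - a) < d -> Cmod (peval c z) <= M * Cmod (z - a) ^ S m) ->
  forall z, Cmod z < 1 -> Cmod (z - a) < d -> z <> a ->
    Cmod (peval (div_root c a) z) <= M * Cmod (z - a) ^ m.
Proof.
  intros Hc Ha H0 H z Hz Hzd Hza. specialize (H z Hz Hzd).
  rewrite (peval_div_root c a z Hc Ha Hz), H0, Cplus_0_r, Cmod_mult in H. simpl in H.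
  apply (Rmult_le_reg_l (Cmod (z - a))); [apply Cmod_sub_pos; exact Hza|]. lra.
Qed.

Lemma vanishes_to_div_root c a m : radius_ge1 c -> Cmod a < 1 -> vanishes_to c a (S m) ->
  vanishes_to (div_root c a) a m.
Proof.
  intros Hc Ha HZ. pose proof (vanishes_to_root c a m Ha HZ) as H0.
  destruct HZ as [d [M [Hd H]]].
  pose proof (div_root_bound_off_root c a m d M Hc Ha H0 H) as Hoff.
  set (D := div_root c a) in *.
  assert (HDa : m <> O -> peval D a = 0%C).
  { intros Hm. set (rho0 := (1 + Cmod a) / 2). pose proof (Cmod_ge_0 a).
    destruct (peval_lipschitz D rho0 a (radius_ge1_div_root c a Hc Ha)) as [B [_ HB]];
      [unfold rho0; lra|unfold rho0; lra|].
    apply (eq0_of_vanishing_near (peval D) a (Rmin d ((1 - Cmod a) / 2)) B M m);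
      [apply Rmin_glb_lt; lra|lia| |].
    - intros z Hzd Hza. pose proof (Rmin_l d ((1 - Cmod a) / 2)).
      apply Hoff; [|lra|exact Hza].
      pose proof (Cmod_triangle (z - a) a). replace (z - a + a)%C with z in H3 by ring.
      pose proof (Rmin_r d ((1 - Cmod a) / 2)). lra.
    - intros z Hzd. apply HB. pose proof (Cmod_triangle (z - a) a).
      replace (z - a + a)%C with z in H2 by ring. pose proof (Rmin_r d ((1 - Cmod a) / 2)).
      unfold rho0. lra. }
  exists d, (Rmax M (Cmod (peval D a))). split; [exact Hd|].
  intros z Hz Hzd. destruct (Classical_Prop.classic (z = a)) as [->|Hza].
  - replace (a - a)%C with (RtoC 0) by ring. rewrite Cmod_0. destruct m as [|m].
    + simpl. rewrite Rmult_1_r. apply Rmax_r.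
    + rewrite HDa, Cmod_0 by lia. simpl. lra.
  - eapply Rle_trans; [apply Hoff; assumption|].
    apply Rmult_le_compat_r; [apply pow_le, Cmod_ge_0|apply Rmax_l].
Qed.

Lemma vanishes_to_div_root_other c a b m : radius_ge1 c -> Cmod a < 1 -> peval c a = 0%C -> b <> a ->
  vanishes_to c b m -> vanishes_to (div_root c a) b m.
Proof.
  intros Hc Ha H0 Hba [d [M [Hd H]]]. pose proof (Cmod_sub_pos b a Hba) as Hba'.
  set (e := Cmod (b - a) / 2).
  exists (Rmin d e), (M / e). split; [apply Rmin_glb_lt; unfold e; lra|].
  intros z Hz Hzd. pose proof (Rmin_l d e). pose proof (Rmin_r d e).
  assert (Hza : e <= Cmod (z - a)).
  { pose proof (Cmod_triangle (z - a) (- (z - b))). rewrite Cmod_opp in H3.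
    replace (z - a + - (z - b))%C with (b - a)%C in H3 by ring. unfold e in *. lra. }
  specialize (H z Hz ltac:(lra)).
  rewrite (peval_div_root c a z Hc Ha Hz), H0, Cplus_0_r, Cmod_mult in H.
  pose proof (Cmod_ge_0 (peval (div_root c a) z)). pose proof (pow_le (Cmod (z - b)) m (Cmod_ge_0 _)).
  apply (Rmult_le_reg_l e); [unfold e; lra|].
  replace (e * (M / e * Cmod (z - b) ^ m)) with (M * Cmod (z - b) ^ m) by (field; unfold e; lra).
  nra.
Qed.

Lemma factor_root_power a r L : Cmod a <= r -> r < 1 -> forall m c, radius_ge1 c -> vanishes_to c a m ->
  (forall p, In p L -> fst p <> a /\ vanishes_to c (fst p) (snd p)) ->
  exists D, radius_ge1 D /\ c = mul_roots (repeat a m) D /\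
    forall p, In p L -> vanishes_to D (fst p) (snd p).
Proof.
  intros Har Hr. assert (Ha : Cmod a < 1) by lra.
  induction m as [|m IH]; intros c Hc HZ HL.
  - exists c. repeat split; [exact Hc|]. intros p Hp. apply HL, Hp.
  - pose proof (vanishes_to_root c a m Ha HZ) as H0.
    destruct (IH (div_root c a) (radius_ge1_div_root c a Hc Ha) (vanishes_to_div_root c a m Hc Ha HZ))
      as [D [HD [E HDL]]].
    { intros p Hp. destruct (HL p Hp) as [Hne HZp]. split; [exact Hne|].
      apply vanishes_to_div_root_other; assumption. }
    exists D. repeat split; [exact HD| |exact HDL].
    rewrite (mul_lin_div_root c a Hc Ha H0) at 1. rewrite E. reflexivity.
Qed.

Definition total_mult (l : list (C * nat)) : nat := fold_right (fun p s => (snd p + s)%nat) 0%nat l.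

Lemma factor_roots r (l : list (C * nat)) : r < 1 -> forall c, NoDup (map fst l) ->
  (forall p, In p l -> Cmod (fst p) <= r /\ vanishes_to c (fst p) (snd p)) -> radius_ge1 c ->
  exists A W, radius_ge1 W /\ c = mul_roots A W /\ length A = total_mult l /\
    forall a, In a A -> Cmod a <= r.
Proof.
  intros Hr. induction l as [|[a m] l IH]; intros c Hnd Hl Hc.
  - exists nil, c. repeat split; [exact Hc|]. intros a [].
  - simpl in Hnd. inversion Hnd as [|x y Hnin Hnd']. subst.
    destruct (Hl (a, m) (or_introl eq_refl)) as [Har HZ]. simpl in Har, HZ.
    destruct (factor_root_power a r l Har Hr m c Hc HZ) as [D [HD [E HDl]]].
    { intros p Hp. split; [|apply Hl; right; exact Hp].
      intros Hpa. apply Hnin. rewrite <- Hpa. apply in_map, Hp. }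
    destruct (IH D Hnd') as [A [W [HW [E2 [Hlen HA]]]]]; [|exact HD|].
    { intros p Hp. split; [apply Hl; right; exact Hp|apply HDl, Hp]. }
    exists (repeat a m ++ A), W. repeat split; [exact HW| | |].
    + rewrite mul_roots_app, <- E2. exact E.
    + rewrite length_app, repeat_length, Hlen. reflexivity.
    + intros b Hb. apply in_app_or in Hb. destruct Hb as [Hb|Hb]; [|apply HA, Hb].
      apply repeat_spec in Hb. subst b. exact Har.
Qed.


(** * The remainder [(alpha_n z - 1) f - P_n] *)

Definition trunc (p : nat -> C) (n : nat) (k : nat) : C := if Nat.leb k n then p k else RtoC 0.

Lemma trunc_out p n k : (n < k)%nat -> trunc p n k = 0%C.
Proof. intros Hk. unfold trunc. destruct (Nat.leb_spec k n); [lia|reflexivity]. Qed.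

Lemma radius_ge1_trunc p n : radius_ge1 (trunc p n).
Proof. apply (radius_ge1_finite _ n), trunc_out. Qed.

Lemma peval_trunc p n z : Cmod z < 1 -> peval (trunc p n) z = poly_eval p n z.
Proof.
  intros Hz. apply peval_unique; [apply radius_ge1_trunc|exact Hz|].
  unfold poly_eval.
  replace (sum_n (fun k => Cmult (p k) (pow_n (K:=C_Ring) z k)) n)
    with (sum_n (fun k => (trunc p n k * z ^ k)%C) n).
  - apply is_Cseries_finite. intros k Hk. rewrite trunc_out by exact Hk. ring.
  - apply sum_n_ext_loc. intros k Hk. unfold trunc. destruct (Nat.leb_spec k n); [|lia].
    reflexivity.
Qed.

(* coefficients of [(al z - 1) f(z) - P(z)] with [deg P <= n] *)
Definition remainder (fk : nat -> C) (al : C) (p : nat -> C) (n : nat) (k : nat) : C :=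
  (mul_lin (RtoC (-1)) al fk k + RtoC (-1) * trunc p n k)%C.

Lemma radius_ge1_remainder fk al p n : radius_ge1 fk -> radius_ge1 (remainder fk al p n).
Proof.
  intros H. apply radius_ge1_add; [apply radius_ge1_mul_lin, H|apply radius_ge1_scal, radius_ge1_trunc].
Qed.

Lemma remainder_high fk al p n j : (n <= j)%nat -> remainder fk al p n (S j) = (- (fk (S j) - al * fk j))%C.
Proof. intros Hj. unfold remainder, mul_lin. rewrite trunc_out by lia. simpl. ring. Qed.


(* The cofactor [h] is bounded near [z0] because it is continuous there. *)
Lemma vanishes_to_of_zero_mult (g : C -> C) c z0 m : zero_mult_ge g z0 m ->
  (forall z, Cmod z < 1 -> peval c z = g z) -> Cmod z0 < 1 -> vanishes_to c z0 m.
Proof.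
  intros [h [Hh Hg]] Heq Hz0.
  pose proof (ex_derive_continuous (K:=C_AbsRing) (V:=C_NormedModule) h z0 (Hh z0 Hz0)) as Hcont.
  destruct (proj1 (filterlim_locally h (h z0)) Hcont (mkposreal 1 Rlt_0_1)) as [d Hd].
  set (K := norm_factor (K:=C_AbsRing) (V:=C_NormedModule)).
  exists d, (Cmod (h z0) + K * 1). split; [apply cond_pos|].
  intros z Hz Hzd.
  pose proof (norm_compat2 (K:=C_AbsRing) (V:=C_NormedModule) (h z0) (h z) (mkposreal 1 Rlt_0_1)
    (Hd z Hzd)) as Hn.
  change (norm (minus (h z) (h z0))) with (Cmod (h z - h z0)) in Hn. simpl in Hn.
  assert (Hhz : Cmod (h z) <= Cmod (h z0) + K * 1).
  { replace (h z) with (h z0 + (h z - h z0))%C by ring.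
    eapply Rle_trans; [apply Cmod_triangle|]. unfold K. lra. }
  rewrite Heq, Hg by exact Hz. change (pow_n (K:=C_Ring) (z - z0)%C m) with ((z - z0) ^ m)%C.
  rewrite Cmod_mult, Cmod_pow.
  rewrite Rmult_comm. apply Rmult_le_compat_r; [apply pow_le, Cmod_ge_0|exact Hhz].
Qed.

Section Taylor_series.

Variables (fk : nat -> C) (f : C -> C).
Hypothesis f_series :
  forall z : C, Cmod z < 1 -> is_series (fun k => Cmult (fk k) (pow_n (K:=C_Ring) z k)) (f z).

Lemma radius_ge1_Taylor : radius_ge1 fk.
Proof.
  intros rho Hr. assert (Hz : Cmod (RtoC rho) < 1) by (rewrite Cmod_RtoC_nonneg; lra).
  destruct (is_Cseries_terms_bounded _ _ (f_series _ Hz)) as [M HM]. exists M. intros k.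
  specialize (HM k). change (pow_n (K:=C_Ring) (RtoC rho) k) with (RtoC rho ^ k)%C in HM.
  rewrite Cmod_mult, Cmod_pow, Cmod_RtoC_nonneg in HM by lra. exact HM.
Qed.

Lemma peval_Taylor z : Cmod z < 1 -> peval fk z = f z.
Proof.
  intros Hz. apply peval_unique; [apply radius_ge1_Taylor|exact Hz|exact (f_series z Hz)].
Qed.

Lemma peval_remainder al p n z : Cmod z < 1 ->
  peval (remainder fk al p n) z = Cminus (Cmult (Q_eval (Some al) z) (f z)) (poly_eval p n z).
Proof.
  intros Hz. pose proof radius_ge1_Taylor as Hc. unfold remainder.
  rewrite peval_add, peval_mul_lin, peval_scal, peval_trunc, (peval_Taylor z Hz);
    auto using radius_ge1_mul_lin, radius_ge1_scal, radius_ge1_trunc.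
  simpl. ring.
Qed.

Lemma remainder_factor al p n r Nn : r < 1 ->
  at_least_zeros (fun z => Cminus (Cmult (Q_eval (Some al) z) (f z)) (poly_eval p n z)) r Nn ->
  exists A W, radius_ge1 W /\ remainder fk al p n = mul_roots A W /\
    (Nn <= Z.of_nat (length A))%Z /\ forall a, In a A -> Cmod a <= r.
Proof.
  intros Hr [l [Hnd [Hl HN]]].
  assert (Hc := radius_ge1_remainder fk al p n radius_ge1_Taylor).
  destruct (factor_roots r l Hr (remainder fk al p n) Hnd) as [A [W [HW [E [Hlen HA]]]]];
    [|exact Hc|].
  - intros q Hq. destruct (Hl q Hq) as [Hq1 Hq2]. split; [exact Hq1|].
    apply (vanishes_to_of_zero_mult _ _ _ _ Hq2); [|lra].
    intros z Hz. apply peval_remainder; assumption.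
  - exists A, W. repeat split; [exact HW|exact E| |exact HA]. rewrite Hlen. exact HN.
Qed.

End Taylor_series.

(** * Coefficient estimates *)

Lemma wnorm_trunc_le R1 R2 p n : 0 < R1 <= R2 -> R2 < 1 ->
  wnorm R2 (trunc p n) <= (R2 / R1) ^ n * wnorm R1 (trunc p n).
Proof.
  intros H1 H2.
  assert (Hratio : 1 <= R2 / R1) by (apply (Rmult_le_reg_r R1); [lra|]; field_simplify; lra).
  unfold wnorm. rewrite <- (sqrt_pow2 ((R2 / R1) ^ n)) by (apply pow_le; lra).
  rewrite <- sqrt_mult_alt by apply pow2_ge_0. apply sqrt_le_1_alt.
  rewrite <- Series_scal_l. apply Series_le.
  - intros k. split; [apply wsq_ge0|]. unfold wsq, trunc. destruct (Nat.leb_spec k n).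
    + replace (R2 ^ k) with ((R2 / R1) ^ k * R1 ^ k) by (rewrite <- Rpow_mult_distr; f_equal; field; lra).
      replace ((Cmod (p k) * ((R2 / R1) ^ k * R1 ^ k)) ^ 2)
        with (((R2 / R1) ^ k) ^ 2 * (Cmod (p k) * R1 ^ k) ^ 2) by ring.
      apply Rmult_le_compat_r; [apply pow2_ge_0|].
      apply pow_incr. split; [apply pow_le; lra|apply Rle_pow; assumption].
    + rewrite Cmod_0, !Rmult_0_l. simpl. lra.
  - apply ex_series_Rscal, ex_series_wsq; [apply radius_ge1_trunc|lra].
Qed.

Lemma two_radii_bootstrap (g1 g2 p1 p2 C0 kap th : R) :
  0 <= g2 -> 0 <= C0 -> 1 <= kap -> 0 <= th ->
  kap * th <= 1 / 2 -> g1 <= th * g2 -> p1 <= C0 + g1 -> p2 <= kap * p1 -> g2 <= C0 + p2 ->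
  g2 <= 4 * C0 * kap.
Proof.
  intros Hg2 HC0 Hkap Hth Hsmall H1 H2 H3 H4.
  assert (kap * p1 <= kap * (C0 + th * g2)) by (apply Rmult_le_compat_l; lra).
  assert (kap * th * g2 <= 1 / 2 * g2) by (apply Rmult_le_compat_r; assumption).
  assert (C0 <= C0 * kap) by (rewrite <- (Rmult_1_r C0) at 1; apply Rmult_le_compat_l; lra).
  lra.
Qed.

(* [g = (al z - 1) f - P] is small on [|z| = R1] (it has many zeros) while [(al z - 1) f] is
   bounded there, so [P] is bounded on [|z| = R1], hence on [|z| = R2] up to [(R2/R1)^n]; this
   bounds [g] on [|z| = R2] and then, through the zeros again, on [|z| = R1]. *)
Lemma remainder_step_bound fk p n al b r R1 R2 A W :
  radius_ge1 fk -> 0 <= r -> 0 < R1 <= R2 -> R2 < 1 -> r * R1 < R2 ^ 2 -> Cmod al <= b ->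
  radius_ge1 W -> remainder fk al p n = mul_roots A W -> (forall a, In a A -> Cmod a <= r) ->
  let T := (R2 / R1) ^ n * shrink_ratio r R1 R2 ^ length A in
  T <= 1 / 2 ->
  forall j, (n <= j)%nat -> Cmod (fk (S j) - al * fk j) * R1 ^ S j <= 4 * ((1 + b) * wnorm R2 fk) * T.
Proof.
  intros Hf Hr HR1 HR2 HrR Hal HW HE HA T HT j Hj.
  set (g := remainder fk al p n). set (h := mul_lin (RtoC (-1)) al fk).
  set (C0 := (1 + b) * wnorm R2 fk). set (kap := (R2 / R1) ^ n).
  set (th := shrink_ratio r R1 R2 ^ length A).
  assert (Hg : radius_ge1 g) by (apply radius_ge1_remainder, Hf).
  assert (Hh : radius_ge1 h) by (apply radius_ge1_mul_lin, Hf).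
  assert (Hkap : 1 <= kap).
  { unfold kap. rewrite <- (pow1 n). apply pow_incr. split; [lra|].
    apply (Rmult_le_reg_r R1); [lra|]. field_simplify; lra. }
  assert (Hth : 0 <= th).
  { apply pow_le. unfold shrink_ratio. apply Rmult_le_pos; [apply Rdiv_le_0_compat|]; lra. }
  assert (Hshrink : wnorm R1 g <= th * wnorm R2 g).
  { unfold g. rewrite HE. apply wnorm_mul_roots_shrink; auto; lra. }
  assert (Hhb : forall rho, 0 <= rho <= R2 -> wnorm rho h <= C0).
  { intros rho Hrho. eapply Rle_trans; [apply wnorm_mul_lin_le; auto; lra|].
    rewrite Cmod_RtoC_m1. unfold C0. pose proof (Cmod_ge_0 al). pose proof (sqrt_pos (Series (wsq rho fk))).
    apply Rmult_le_compat; [nra|apply sqrt_pos|nra|apply wnorm_le_radius; auto; lra]. }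
  assert (Eg : g = fun k => (h k + RtoC (-1) * trunc p n k)%C) by reflexivity.
  assert (Ep : trunc p n = fun k => (h k + RtoC (-1) * g k)%C).
  { apply functional_extensionality. intros k. rewrite Eg. ring. }
  assert (HpR1 : wnorm R1 (trunc p n) <= C0 + wnorm R1 g).
  { rewrite Ep at 1. eapply Rle_trans; [apply wnorm_add; auto using radius_ge1_scal; lra|].
    rewrite wnorm_opp. pose proof (Hhb R1 ltac:(lra)). lra. }
  assert (HgR2 : wnorm R2 g <= C0 + wnorm R2 (trunc p n)).
  { rewrite Eg at 1.
    eapply Rle_trans; [apply wnorm_add; auto using radius_ge1_scal, radius_ge1_trunc; lra|].
    rewrite wnorm_opp. pose proof (Hhb R2 ltac:(lra)). lra. }
  pose proof (wnorm_trunc_le R1 R2 p n HR1 HR2) as HpR2. fold kap in HpR2.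
  assert (HC0 : 0 <= C0) by (eapply Rle_trans; [apply sqrt_pos|apply (Hhb R2); lra]).
  assert (Hbound : wnorm R2 g <= 4 * C0 * kap)
    by (apply (two_radii_bootstrap (wnorm R1 g) _ (wnorm R1 (trunc p n)) (wnorm R2 (trunc p n))
          C0 kap th); try assumption; apply sqrt_pos).
  rewrite <- (Cmod_opp (fk (S j) - al * fk j)), <- (remainder_high fk al p n j Hj).
  eapply Rle_trans; [apply coef_le_wnorm; auto; lra|]. fold g.
  eapply Rle_trans; [exact Hshrink|]. unfold T. fold kap th. nra.
Qed.

Lemma coef_recursion_bound (x : nat -> C) (al : C) b R1 E n : 0 <= b -> 0 < R1 -> b * R1 < 1 ->
  Cmod al <= b -> 0 <= E ->
  (forall j, (n <= j)%nat -> Cmod (x (S j) - al * x j) * R1 ^ S j <= E) ->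
  forall d, Cmod (x (n + d)%nat) <= b ^ d * Cmod (x n) + E / R1 ^ (n + d) / (1 - b * R1).
Proof.
  intros Hb HR1 HbR Hal HE H. induction d as [|d IH].
  - rewrite Nat.add_0_r. simpl.
    assert (0 <= E / R1 ^ n / (1 - b * R1)).
    { apply Rdiv_le_0_compat; [apply Rdiv_le_0_compat; [exact HE|apply pow_lt; lra]|lra]. }
    lra.
  - replace (n + S d)%nat with (S (n + d)) by lia.
    specialize (H (n + d)%nat ltac:(lia)).
    assert (HR : 0 < R1 ^ (n + d)) by (apply pow_lt; lra).
    assert (H' : Cmod (x (S (n + d)) - al * x (n + d)%nat) <= E / R1 ^ S (n + d)).
    { apply (Rmult_le_reg_r (R1 ^ S (n + d))); [apply pow_lt; lra|].
      replace (E / R1 ^ S (n + d) * R1 ^ S (n + d)) with E by (field; apply pow_nonzero; lra).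
      exact H. }
    replace (x (S (n + d))) with ((x (S (n + d)) - al * x (n + d)%nat) + al * x (n + d)%nat)%C by ring.
    eapply Rle_trans; [apply Cmod_triangle|]. rewrite Cmod_mult.
    pose proof (Cmod_ge_0 (x (n + d)%nat)). pose proof (Cmod_ge_0 al).
    assert (Cmod al * Cmod (x (n + d)%nat) <= b * (b ^ d * Cmod (x n) + E / R1 ^ (n + d) / (1 - b * R1)))
      by (apply Rmult_le_compat; assumption).
    replace (b ^ S d * Cmod (x n) + E / R1 ^ S (n + d) / (1 - b * R1))
      with (E / R1 ^ S (n + d) + b * (b ^ d * Cmod (x n) + E / R1 ^ (n + d) / (1 - b * R1)))
      by (simpl; field; repeat split; lra).
    lra.
Qed.

(* Constraints on the auxiliary radii [R1 <= R2] and integers [m], [lam]: the coefficient [f_k]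
   is estimated through the approximant of index [n = k / m], which has at least [lam * k] zeros. *)
Record admissible (r b b' R1 R2 : R) (m lam : nat) : Prop := {
  adm_r : 0 <= r;
  adm_b : 0 < b < b';
  adm_R2 : r < R2 < 1;
  adm_R1 : 0 < R1 <= R2;
  adm_rR : r * R1 < R2 ^ 2;
  adm_bR1 : b * R1 <= 1 / 2;
  adm_ratio : 0 <= shrink_ratio r R1 R2 < 1;
  adm_m : (1 <= m)%nat;
  adm_m_b : / (b * R2) <= (b' / b) ^ m;
  adm_m_R : R2 / R1 <= 2 ^ m;
  adm_lam : 2 * shrink_ratio r R1 R2 ^ lam <= Rmin (1 / 4) (b' * R1) }.

Lemma exists_admissible r b b' : 0 <= r < 1 -> 0 < b < b' ->
  exists R1 R2 m lam, admissible r b b' R1 R2 m lam.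
Proof.
  intros Hr Hb. set (R2 := (1 + r) / 2).
  set (R1 := Rmin (R2 * (R2 - r) / (2 * (R2 + r))) (1 / (2 * b))).
  assert (HR2 : r < R2 < 1) by (unfold R2; lra).
  assert (HR1 : 0 < R1) by (apply Rmin_glb_lt; apply Rdiv_lt_0_compat; nra).
  assert (HR1a : R1 * (2 * (R2 + r)) <= R2 * (R2 - r)).
  { replace (R2 * (R2 - r)) with (R2 * (R2 - r) / (2 * (R2 + r)) * (2 * (R2 + r))) by (field; lra).
    apply Rmult_le_compat_r; [lra|apply Rmin_l]. }
  assert (HbR1 : b * R1 <= 1 / 2).
  { replace (1 / 2) with (b * (1 / (2 * b))) by (field; lra). apply Rmult_le_compat_l; [lra|apply Rmin_r]. }
  assert (HR12 : R1 <= R2) by nra.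
  assert (HrR : r * R1 < R2 ^ 2) by nra.
  assert (Hq : 0 <= shrink_ratio r R1 R2 < 1).
  { unfold shrink_ratio. assert ((R1 + r) * R2 < R2 ^ 2 - r * R1) by nra. split.
    - apply Rmult_le_pos; [apply Rdiv_le_0_compat|]; lra.
    - replace ((R1 + r) / (R2 ^ 2 - r * R1) * R2) with ((R1 + r) * R2 / (R2 ^ 2 - r * R1)) by (field; lra).
      apply (Rmult_lt_reg_r (R2 ^ 2 - r * R1)); [lra|]. field_simplify; lra. }
  destruct (exists_pow_ge (b' / b) (/ (b * R2))) as [m1 [Hm1 Hm1']].
  { apply (Rmult_lt_reg_r b); [lra|]. field_simplify; lra. }
  destruct (exists_pow_ge 2 (R2 / R1)) as [m2 [Hm2 Hm2']]; [lra|].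
  destruct (exists_pow_le (shrink_ratio r R1 R2) (Rmin (1 / 8) (b' * R1 / 2))) as [lam Hlam];
    [exact Hq|apply Rmin_glb_lt; [lra|apply Rdiv_lt_0_compat; nra]|].
  exists R1, R2, (Nat.max m1 m2), lam. split; try assumption; try lra; try lia.
  - eapply Rle_trans; [exact Hm1'|]. apply Rle_pow; [|lia].
    apply (Rmult_le_reg_r b); [lra|]. field_simplify; lra.
  - eapply Rle_trans; [exact Hm2'|]. apply Rle_pow; [lra|lia].
  - pose proof (Rmin_l (1 / 8) (b' * R1 / 2)). pose proof (Rmin_r (1 / 8) (b' * R1 / 2)).
    apply Rmin_glb; lra.
Qed.

Section Admissible.

Variables (r b b' R1 R2 : R) (m lam : nat).
Hypothesis adm : admissible r b b' R1 R2 m lam.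

Lemma admissible_weight_le n k len : (m * n <= k)%nat -> (lam * k <= len)%nat ->
  (R2 / R1) ^ n * shrink_ratio r R1 R2 ^ len <= (2 * shrink_ratio r R1 R2 ^ lam) ^ k.
Proof.
  destruct adm as [Hr Hb HR2 HR1 HrR HbR1 Hq Hm Hmb HmR Hlam]. intros Hk Hlen.
  set (q := shrink_ratio r R1 R2) in *.
  rewrite Rpow_mult_distr, <- pow_mult.
  apply Rmult_le_compat; [apply pow_le; apply Rdiv_le_0_compat; lra|apply pow_le; lra| |].
  - apply Rle_trans with ((2 ^ m) ^ n); [apply pow_incr; split; [apply Rdiv_le_0_compat|]; lra|].
    rewrite <- pow_mult. apply Rle_pow; [lra|exact Hk].
  - apply pow_le_pow_le1; [lra|lia].
Qed.

Lemma admissible_geom_le n k : (m * n <= k)%nat -> (n <= k)%nat -> b ^ (k - n) <= b' ^ k * R2 ^ n.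
Proof.
  destruct adm as [Hr Hb HR2 HR1 HrR HbR1 Hq Hm Hmb HmR Hlam]. intros Hk Hnk.
  assert (Hbb : 1 <= b' / b) by (apply (Rmult_le_reg_r b); [lra|]; field_simplify; lra).
  assert (Hinv : 0 <= / (b * R2)) by (left; apply Rinv_0_lt_compat; nra).
  replace (b ^ (k - n)) with (b ^ k * (/ (b * R2)) ^ n * R2 ^ n).
  - apply Rmult_le_compat_r; [apply pow_le; lra|].
    apply Rle_trans with (b ^ k * (b' / b) ^ k); [|right; rewrite <- Rpow_mult_distr; f_equal; field; lra].
    apply Rmult_le_compat_l; [apply pow_le; lra|].
    apply Rle_trans with (((b' / b) ^ m) ^ n); [apply pow_incr; lra|].
    rewrite <- pow_mult. apply Rle_pow; [exact Hbb|exact Hk].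
  - rewrite pow_inv, Rpow_mult_distr. replace k with (n + (k - n))%nat at 1 by lia. rewrite pow_add.
    field. split; apply pow_nonzero; lra.
Qed.

Lemma coef_bound_admissible fk p al n k A W : radius_ge1 fk -> Cmod al <= b ->
  radius_ge1 W -> remainder fk al p n = mul_roots A W -> (forall a, In a A -> Cmod a <= r) ->
  (m * n <= k)%nat -> (1 <= k)%nat -> (n <= k)%nat -> (lam * k <= length A)%nat ->
  Cmod (fk k) <= wnorm R2 fk * (1 + 4 * (1 + b) / (1 - b * R1)) * b' ^ k.
Proof.
  intros Hf Hal HW HE HA Hmn Hk Hnk Hlen.
  pose proof (admissible_weight_le n k (length A) Hmn Hlen) as HTk.
  pose proof (admissible_geom_le n k Hmn Hnk) as Hgeom.
  destruct adm as [Hr Hb HR2 HR1 HrR HbR1 Hq Hm Hmb HmR Hlam]. set (q := shrink_ratio r R1 R2) in *.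
  set (T := (R2 / R1) ^ n * q ^ length A) in *.
  set (F := wnorm R2 fk). set (C0 := (1 + b) * F).
  assert (HF : 0 <= F) by apply sqrt_pos.
  assert (HT0 : 0 <= T) by (apply Rmult_le_pos; apply pow_le; [apply Rdiv_le_0_compat|]; lra).
  assert (Hq0 : 0 <= 2 * q ^ lam) by (pose proof (pow_le q lam ltac:(lra)); lra).
  pose proof (Rmin_l (1 / 4) (b' * R1)). pose proof (Rmin_r (1 / 4) (b' * R1)).
  assert (HThalf : T <= 1 / 2).
  { eapply Rle_trans; [exact HTk|].
    eapply Rle_trans; [apply (pow_le_pow_le1 _ 1); [lra|exact Hk]|]. simpl; lra. }
  assert (HTR : T <= b' ^ k * R1 ^ k).
  { rewrite <- Rpow_mult_distr. eapply Rle_trans; [exact HTk|apply pow_incr; lra]. }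
  pose proof (remainder_step_bound fk p n al b r R1 R2 A W Hf Hr HR1 (proj2 HR2) HrR Hal
    HW HE HA HThalf) as Hstep.
  assert (HbR : b * R1 < 1) by lra.
  assert (HC0 : 0 <= C0) by (unfold C0; apply Rmult_le_pos; lra).
  assert (HE0 : 0 <= 4 * C0 * T) by (apply Rmult_le_pos; lra).
  pose proof (coef_recursion_bound fk al b R1 (4 * C0 * T) n ltac:(lra) (proj1 HR1) HbR Hal
    HE0 Hstep (k - n)) as Hrec.
  replace (n + (k - n))%nat with k in Hrec by lia.
  assert (Hfn : Cmod (fk n) * R2 ^ n <= F) by (apply coef_le_wnorm; [exact Hf|lra]).
  assert (H1 : b ^ (k - n) * Cmod (fk n) <= F * b' ^ k).
  { pose proof (Cmod_ge_0 (fk n)). pose proof (pow_le b' k ltac:(lra)). nra. }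
  assert (H2 : 4 * C0 * T / R1 ^ k / (1 - b * R1) <= 4 * C0 / (1 - b * R1) * b' ^ k).
  { assert (HR1k : 0 < R1 ^ k) by (apply pow_lt; lra).
    replace (4 * C0 * T / R1 ^ k / (1 - b * R1)) with (4 * C0 / (1 - b * R1) * (T / R1 ^ k))
      by (field; lra).
    apply Rmult_le_compat_l; [apply Rdiv_le_0_compat; lra|].
    apply (Rmult_le_reg_r (R1 ^ k)); [exact HR1k|].
    replace (T / R1 ^ k * R1 ^ k) with T by (field; lra). exact HTR. }
  replace (F * (1 + 4 * (1 + b) / (1 - b * R1)) * b' ^ k)
    with (F * b' ^ k + 4 * C0 / (1 - b * R1) * b' ^ k) by (unfold C0; field; lra).
  lra.
Qed.

End Admissible.

(** * Limits superior *)

Lemma root_abs_ge0 fk k : 0 <= root_abs fk k.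
Proof.
  unfold root_abs. destruct (Req_EM_T (Cmod (fk k)) 0); [lra|]. left. apply exp_pos.
Qed.

Lemma inv_ext_conv_radius fk : inv_ext (conv_radius fk) = LimSup_seq (root_abs fk).
Proof.
  assert (H0 : Rbar_le 0 (LimSup_seq (root_abs fk))).
  { rewrite <- (LimSup_seq_const 0). apply LimSup_le. exists O. intros k _. apply root_abs_ge0. }
  unfold conv_radius. destruct (LimSup_seq (root_abs fk)) as [l| |]; simpl.
  - destruct (Req_EM_T l 0) as [->|Hl]; simpl; [reflexivity|].
    destruct (Req_EM_T (/ l) 0) as [Hl'|_]; [exfalso; exact (Rinv_neq_0_compat l Hl Hl')|].
    rewrite Rinv_inv. reflexivity.
  - destruct (Req_EM_T 0 0); [reflexivity|congruence].
  - contradiction.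
Qed.

(* If [|f_k| <= A0 b'^k] eventually then [|f_k|^(1/k) <= A0^(1/k) b'], and [A0^(1/k) -> 1]. *)
Lemma limsup_root_abs_le (fk : nat -> C) A0 b' b'' K0 : 0 < b' < b'' -> 1 <= A0 ->
  (forall k, (K0 <= k)%nat -> Cmod (fk k) <= A0 * b' ^ k) -> Rbar_le (LimSup_seq (root_abs fk)) b''.
Proof.
  intros Hb HA H. rewrite <- (LimSup_seq_const b''). apply LimSup_le.
  assert (Hl : 0 < ln (b'' / b')).
  { rewrite <- ln_1. apply ln_increasing; [lra|]. apply (Rmult_lt_reg_r b'); [lra|]. field_simplify; lra. }
  assert (HlA : 0 <= ln A0) by (rewrite <- ln_1; apply ln_le; lra).
  destruct (INR_unbounded (ln A0 / ln (b'' / b'))) as [K1 HK1].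
  exists (Nat.max K0 (Nat.max 1 K1)). intros k Hk.
  unfold root_abs. destruct (Req_EM_T (Cmod (fk k)) 0) as [|Hne]; [lra|].
  assert (Hkpos : 0 < INR k) by (apply lt_0_INR; lia).
  assert (HK : ln A0 / ln (b'' / b') <= INR k) by (pose proof (le_INR K1 k ltac:(lia)); lra).
  specialize (H k ltac:(lia)). pose proof (Cmod_ge_0 (fk k)).
  eapply Rle_trans.
  { apply Rle_Rpower_l; [left; apply Rinv_0_lt_compat; exact Hkpos|split; [lra|exact H]]. }
  rewrite <- Rpower_mult_distr by (lra || (apply pow_lt; lra)).
  rewrite <- (Rpower_pow k b') by lra. rewrite Rpower_mult, Rinv_r, Rpower_1 by lra.
  assert (Hexp : Rpower A0 (/ INR k) <= b'' / b').
  { unfold Rpower. rewrite <- (exp_ln (b'' / b')) by (apply Rdiv_lt_0_compat; lra).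
    destruct (Req_dec (/ INR k * ln A0) (ln (b'' / b'))) as [E|Hneq]; [rewrite E; lra|].
    left. apply exp_increasing.
    apply (Rmult_le_compat_r (ln (b'' / b'))) in HK; [|lra].
    replace (ln A0 / ln (b'' / b') * ln (b'' / b')) with (ln A0) in HK by (field; lra).
    assert (/ INR k * ln A0 <= ln (b'' / b')).
    { apply (Rmult_le_reg_l (INR k)); [exact Hkpos|]. field_simplify; lra. }
    lra. }
  apply Rle_trans with (b'' / b' * b'); [apply Rmult_le_compat_r; lra|right; field; lra].
Qed.

Lemma LimSupRbar_ge0 (u : nat -> Rbar) : (forall n, Rbar_le 0 (u n)) -> Rbar_le 0 (LimSupRbar u).
Proof.
  intros Hu. apply (proj2 (proj2_sig (Rbar_ex_glb _))). intros y [N0 ->].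
  eapply Rbar_le_trans; [apply (Hu N0)|]. apply (proj1 (proj2_sig (Rbar_ex_lub _))).
  exists N0. split; [lia|reflexivity].
Qed.

Lemma LimSupRbar_lt_eventually (u : nat -> Rbar) (b : R) : Rbar_lt (LimSupRbar u) b ->
  exists N0, forall n, (N0 <= n)%nat -> Rbar_lt (u n) b.
Proof.
  intros Hlt. unfold LimSupRbar in Hlt.
  set (E := fun y => exists N0 : nat, y = Rbar_lub (fun x => exists n, (N0 <= n)%nat /\ x = u n)) in Hlt.
  destruct (Classical_Prop.classic (exists y, E y /\ Rbar_lt y b)) as [[y [[N0 ->] Hy]]|Hno].
  - exists N0. intros n Hn. eapply Rbar_le_lt_trans; [|exact Hy].
    apply (proj1 (proj2_sig (Rbar_ex_lub _))). exists n. split; [exact Hn|reflexivity].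
  - exfalso. apply (Rbar_lt_not_le _ _ Hlt). apply (proj2 (proj2_sig (Rbar_ex_glb E))).
    intros y Ey. apply Rbar_not_lt_le. intros Hy. apply Hno. exists y. split; assumption.
Qed.

Lemma Rbar_exists_between3 (x y : Rbar) : Rbar_le 0 x -> Rbar_lt x y ->
  exists b b' b'' : R, 0 < b /\ Rbar_lt x b /\ b < b' /\ b' < b'' /\ Rbar_lt b'' y.
Proof.
  intros H0 Hxy. destruct x as [a| |]; [|destruct y; contradiction|contradiction].
  simpl in H0. destruct y as [l| |]; simpl in Hxy; [| |contradiction].
  - exists (a + (l - a) / 4), (a + (l - a) / 2), (a + 3 * (l - a) / 4). simpl. repeat split; lra.
  - exists (a + 1), (a + 2), (a + 3). simpl. repeat split; lra.
Qed.

Lemma zeros_per_coef (Nn : Z) (len m lam n k : nat) : (1 <= n)%nat ->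
  INR (2 * m * lam) < IZR Nn / INR n -> (Nn <= Z.of_nat len)%Z -> (k < m * S n)%nat ->
  (lam * k <= len)%nat.
Proof.
  intros Hn Hratio Hlen Hk.
  assert (Hnpos : 0 < INR n) by (apply lt_0_INR; lia).
  assert (Hlt : INR (2 * m * lam * n) < INR len).
  { rewrite mult_INR, (INR_IZR_INZ len). apply Rlt_le_trans with (IZR Nn); [|apply IZR_le, Hlen].
    apply (Rmult_lt_compat_r (INR n)) in Hratio; [|exact Hnpos].
    replace (IZR Nn / INR n * INR n) with (IZR Nn) in Hratio by (field; lra). exact Hratio. }
  apply INR_lt in Hlt.
  assert (lam * k <= lam * (m * S n))%nat by (apply Nat.mul_le_mono_l; lia).
  assert (lam * (m * S n) <= 2 * m * lam * n)%nat by nia.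
  lia.
Qed.

Lemma coef_geometric_bound (fk : nat -> C) (f : C -> C) r (N : nat -> Z) (P : nat -> nat -> C)
    (alpha : nat -> option C) (b b' : R) :
  (forall z : C, Cmod z < 1 -> is_series (fun k => Cmult (fk k) (pow_n (K:=C_Ring) z k)) (f z)) ->
  0 <= r < 1 -> is_lim_seq (fun n => IZR (N n) / INR n) p_infty ->
  (forall n : nat,
     at_least_zeros (fun z => Cminus (Cmult (Q_eval (alpha n) z) (f z)) (poly_eval (P n) n z)) r (N n)) ->
  0 < b < b' -> (exists N0, forall n, (N0 <= n)%nat -> Rbar_lt (abs_alpha (alpha n)) b) ->
  exists A0 K0, 1 <= A0 /\ forall k, (K0 <= k)%nat -> Cmod (fk k) <= A0 * b' ^ k.
Proof.
  intros Hser Hr HNlim Hzeros Hb [N0 HN0].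
  destruct (exists_admissible r b b' Hr Hb) as [R1 [R2 [m [lam Hadm]]]].
  assert (Hm : m <> O) by (pose proof (adm_m _ _ _ _ _ _ _ Hadm); lia).
  destruct (proj2 (is_lim_seq_spec _ _) HNlim (INR (2 * m * lam))) as [N1 HN1].
  set (M0 := Nat.max N0 (Nat.max N1 1)).
  exists (Rmax 1 (wnorm R2 fk * (1 + 4 * (1 + b) / (1 - b * R1)))), (m * M0)%nat.
  split; [apply Rmax_l|]. intros k Hk. set (n := (k / m)%nat).
  assert (Hmn : (m * n <= k)%nat) by apply Nat.Div0.mul_div_le.
  assert (Hkn : (k < m * S n)%nat) by (apply Nat.mul_succ_div_gt; exact Hm).
  assert (HnM : (M0 <= n)%nat).
  { unfold n. rewrite <- (Nat.div_mul M0 m Hm). apply Nat.Div0.div_le_mono. lia. }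
  pose proof (HN0 n ltac:(lia)) as Hal. specialize (Hzeros n).
  destruct (alpha n) as [al|]; simpl in Hal; [|contradiction].
  destruct (remainder_factor fk f Hser al (P n) n r (N n) ltac:(lra) Hzeros)
    as [A [W [HW [HE [HNA HA]]]]].
  eapply Rle_trans.
  - apply (coef_bound_admissible r b b' R1 R2 m lam Hadm fk (P n) al n k A W
      (radius_ge1_Taylor fk f Hser) ltac:(lra) HW HE HA Hmn ltac:(nia) ltac:(nia)).
    apply (zeros_per_coef (N n) _ m lam n k); [lia|apply HN1; lia|exact HNA|exact Hkn].
  - apply Rmult_le_compat_r; [apply pow_le; lra|apply Rmax_r].
Qed.

Theorem lemma3p3
  (f : C -> C) (fk : nat -> C) (r : R)
  (N : nat -> Z) (P : nat -> nat -> C) (alpha : nat -> option C) :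
  holo_disk f ->
  (forall z : C, Cmod z < 1 -> is_series (fun k => Cmult (fk k) (pow_n (K:=C_Ring) z k)) (f z)) ->
  0 < r -> r < 1 ->
  (forall n : nat, (N n < N (S n))%Z) ->
  is_lim_seq (fun n => IZR (N n) / INR n) p_infty ->
  (forall n : nat,
     at_least_zeros
       (fun z => Cminus (Cmult (Q_eval (alpha n) z) (f z)) (poly_eval (P n) n z))
       r (N n)) ->
  Rbar_le (inv_ext (conv_radius fk)) (LimSupRbar (fun n => abs_alpha (alpha n))).
Proof.
  intros _ Hser Hr0 Hr1 _ HNlim Hzeros.
  set (u := fun n => abs_alpha (alpha n)).
  assert (Hu0 : Rbar_le 0 (LimSupRbar u)).
  { apply LimSupRbar_ge0. intros n. unfold u, abs_alpha.
    destruct (alpha n); [apply Cmod_ge_0|exact I]. }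
  rewrite inv_ext_conv_radius. apply Rbar_not_lt_le. intros Hlt.
  destruct (Rbar_exists_between3 _ _ Hu0 Hlt) as (b & b' & b'' & Hb & Hub & Hbb' & Hb'b'' & HL).
  destruct (coef_geometric_bound fk f r N P alpha b b' Hser ltac:(lra) HNlim Hzeros ltac:(lra)
    (LimSupRbar_lt_eventually u b Hub)) as [A0 [K0 [HA0 Hcoef]]].
  exact (Rbar_lt_not_le _ _ HL (limsup_root_abs_le fk A0 b' b'' K0 ltac:(lra) HA0 Hcoef)).
Qed.
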